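(* Let $n\ge 1$ be an integer, $S$ a finite set of $n\times n$ unitary matrices, $T$ a finite set, $g:S\to T$ a function, $q\ge 1$ an integer and $0\le\varepsilon\le 1$. Then a $(q,\varepsilon)$-QQA for $g$ exists if and only if the semidefinite feasibility problem $P(g,q,\varepsilon)$ has a feasible solution. Furthermore, for each feasible solution $\langle\{\rho^{IQ}(t)\}_{t},\rho^I(q),\{\Gamma_z\}_{z\in T}\rangle$ of $P(g,q,\varepsilon)$ there is a $(q,\varepsilon)$-QQA computing $g$ whose workspace dimension is no larger than the greater of $|S|n$ and $\lceil \sum_{z\in T}\mathrm{rank}(\Gamma_z)/n\rceil$. Since the latter is at most $\lceil |S||T|/n\rceil$, any $(q,\varepsilon)$-QQA computing $g$ can be implemented with workspace dimension at most $\max\{|S|n,\lceil |S||T|/n\rceil\}$ in addition to the $n$-dimensional query register.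
   Context: Query model: a $q$-query quantum algorithm (QQA) for $g$ consists of a workspace dimension $|W|$, unitaries $U_0,U_1,\dots,U_q$ acting on $Q\otimes W=\mathbb{C}^n\otimes\mathbb{C}^{|W|}$ (standard bases $\{|i\rangle\}$, $\{|j\rangle\}$), and a projective measurement $\{P_z\}_{z\in T}$ on $Q\otimes W$ (orthogonal projectors with $\sum_z P_z=I$). On input $X\in S$ the final state is $|\Phi_X(q)\rangle=U_q(X\otimes I)U_{q-1}(X\otimes I)\cdots U_1(X\otimes I)U_0|0\rangle|0\rangle$, and the outcome $z$ is obtained with probability $\langle\Phi_X(q)|P_z|\Phi_X(q)\rangle$. The QQA is a $(q,\varepsilon)$-QQA for $g$ (it $\varepsilon$-computes $g$) if $\langle\Phi_X(q)|P_{g(X)}|\Phi_X(q)\rangle\ge 1-\varepsilon$ for every $X\in S$. Let $I=\mathbb{C}^{S}$ with orthonormal basis $\{|X\rangle\}_{X\in S}$, and let $\Omega$ be the unitary on $I\otimes Q$ given by $\Omega|X\rangle|i\rangle=|X\rangle X|i\rangle$ (block diagonal with diagonal blocks the matrices $X\in S$). $\mathrm{tr}_Q$ denotes the partial trace over $Q$, $E$ the $|S|\times|S|$ all-ones matrix, $*$ the entrywise (Hadamard) product, and for $z\in T$, $\Delta_z$ the diagonal $|S|\times|S|$ matrix with $\Delta_z[X,X]=1$ if $g(X)=z$ and $0$ otherwise. $P(g,q,\varepsilon)$: find positive semidefinite Hermitian $|S|n\times|S|n$ matrices $\rho^{IQ}(t)$, $t=0,\dots,q-1$ (operators on $I\otimes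 Q$), a PSD $|S|\times|S|$ matrix $\rho^I(q)$, and PSD $|S|\times|S|$ matrices $\Gamma_z$ ($z\in T$) such that $\mathrm{tr}_Q\rho^{IQ}(0)=E$; $\mathrm{tr}_Q\rho^{IQ}(t)=\mathrm{tr}_Q\,\Omega\rho^{IQ}(t-1)\Omega^\dagger$ for $1\le t\le q-1$; $\rho^I(q)=\mathrm{tr}_Q\,\Omega\rho^{IQ}(q-1)\Omega^\dagger$; $\sum_{z\in T}\Gamma_z=\rho^I(q)$; and $\Delta_z*\Gamma_z\succeq(1-\varepsilon)\Delta_z$ for all $z\in T$. *)

(* Complex scalars: an arbitrary numClosedFieldType C
   (e.g. complex numbers R[i] over the reals), the library's setting for
   unitary matrices (spectral.v). *)
From HB Require Import structures.
From mathcomp Require Import all_boot all_order all_algebra.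
From mathcomp.real_closed Require mxtens.

Set Implicit Arguments.
Unset Strict Implicit.
Unset Printing Implicit Defensive.

Import Order.TTheory GRing.Theory Num.Theory.
Local Open Scope ring_scope.

Section QQA.
Variable C : numClosedFieldType.

Definition adjmx {p r : nat} (A : 'M[C]_(p, r)) : 'M[C]_(r, p) :=
  map_mx Num.conj (A^T).

Definition psdmx {p : nat} (A : 'M[C]_p) : Prop :=
  adjmx A = A /\ forall v : 'cV[C]_p, 0 <= (adjmx v *m A *m v) 0 0.

Definition loewner_ge {p : nat} (A B : 'M[C]_p) : Prop := psdmx (A - B).

Definition orth_proj {p : nat} (P : 'M[C]_p) : Prop :=
  adjmx P = P /\ P *m P = P.

Definition basis_cv (p i : nat) : 'cV[C]_p := \col_(k < p) ((k : nat) == i)%:R.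

(* Kronecker product (index (i,j) of 'I_(p*r) is i*r + j) *)
Definition kron {p1 r1 p2 r2 : nat} (A : 'M[C]_(p1, r1)) (B : 'M[C]_(p2, r2))
  : 'M[C]_(p1 * p2, r1 * r2) := mxtens.tensmx A B.

Fixpoint qqa_state (n w : nat) (X : 'M[C]_n) (U : nat -> 'M[C]_(n * w)) (t : nat)
  : 'cV[C]_(n * w) :=
  match t with
  | 0 => U 0%N *m kron (basis_cv n 0) (basis_cv w 0)
  | t'.+1 => U t'.+1 *m (kron X (1%:M : 'M[C]_w) *m qqa_state X U t')
  end.

(* (U_0..U_q, {P_z}) with workspace dimension w is a (q,eps)-QQA for g,
   where S = {Xs s | s < m} *)
Definition is_QQA (n m : nat) (Xs : 'I_m -> 'M[C]_n) (T : finType) (g : 'I_m -> T)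
  (q : nat) (eps : C) (w : nat) (U : nat -> 'M[C]_(n * w)) (P : T -> 'M[C]_(n * w))
  : Prop :=
  [/\ (forall t, (t <= q)%N -> U t \is unitarymx),
      (forall z, orth_proj (P z)),
      \sum_(z : T) P z = 1%:M &
      forall s : 'I_m,
        1 - eps <= (adjmx (qqa_state (Xs s) U q) *m P (g s) *m qqa_state (Xs s) U q) 0 0].

Definition QQA_exists (n m : nat) (Xs : 'I_m -> 'M[C]_n) (T : finType) (g : 'I_m -> T)
  (q : nat) (eps : C) (w : nat) : Prop :=
  (0 < w)%N /\ exists U P, @is_QQA n m Xs T g q eps w U P.

Definition ptraceQ (m n : nat) (A : 'M[C]_(m * n)) : 'M[C]_m :=
  \matrix_(a < m, b < m)
    \sum_(i < n) A (mxtens.mxtens_index (a, i)) (mxtens.mxtens_index (b, i)).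

Definition Omega (n m : nat) (Xs : 'I_m -> 'M[C]_n) : 'M[C]_(m * n) :=
  \sum_(s < m) kron (delta_mx s s : 'M[C]_m) (Xs s).

Definition Delta (m : nat) (T : finType) (g : 'I_m -> T) (z : T) : 'M[C]_m :=
  diag_mx (\row_(s < m) ((g s == z)%:R : C)).

Definition hadamard (p : nat) (A B : 'M[C]_p) : 'M[C]_p :=
  \matrix_(i, j) (A i j * B i j).

Definition P_feasible_sol (n m : nat) (Xs : 'I_m -> 'M[C]_n) (T : finType)
  (g : 'I_m -> T) (q : nat) (eps : C)
  (rho : nat -> 'M[C]_(m * n)) (rhoI : 'M[C]_m) (Gam : T -> 'M[C]_m) : Prop :=
  let Om := Omega Xs in
  (forall t, (t < q)%N -> psdmx (rho t)) /\
  psdmx rhoI /\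
  (forall z, psdmx (Gam z)) /\
  ptraceQ (rho 0%N) = const_mx 1 /\
  (forall t, (0 < t < q)%N ->
     ptraceQ (rho t) = ptraceQ (Om *m rho t.-1 *m adjmx Om)) /\
  rhoI = ptraceQ (Om *m rho q.-1 *m adjmx Om) /\
  \sum_(z : T) Gam z = rhoI /\
  (forall z, loewner_ge (hadamard (Delta g z) (Gam z)) ((1 - eps) *: Delta g z)).

Definition P_feasible (n m : nat) (Xs : 'I_m -> 'M[C]_n) (T : finType)
  (g : 'I_m -> T) (q : nat) (eps : C) : Prop :=
  exists rho rhoI Gam, @P_feasible_sol n m Xs T g q eps rho rhoI Gam.

End QQA.

Definition ceil_div (a b : nat) : nat := (a + b.-1) %/ b.

(* The state of a query algorithm on input X after t queries is a vector
   psi_X(t) in Q (x) W.  Stacking these vectors into a matrix M(t) gives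
   rho^IQ(t) = M(t) M(t)^*, whose partial trace over Q is the Gram matrix of the
   family psi(t); the constraints of P(g,q,eps) say exactly that consecutive Gram
   matrices are related by the oracle Omega.  Two families with the same Gram
   matrix differ by a unitary, so from a feasible solution the U_t can be
   recovered one at a time, after factoring rho^IQ(t) through a workspace of
   dimension at least |S|n.  For the measurement, write Gamma_z = G_z G_z^* with
   rank Gamma_z columns, put the G_z side by side and let P_z project onto the
   coordinates of the block of z; this needs n|W| >= sum_z rank Gamma_z. *)

From HB Require Import structures.
From mathcomp Require Import all_boot all_order all_algebra.
From mathcomp.real_closed Require Import mxtens.
From mathcomp Require Import zify.

Set Implicit Arguments.
Unset Strict Implicit.
Unset Printing Implicit Defensive.

Import Order.TTheory GRing.Theory Num.Theory Num.Def.
Local Open Scope ring_scope.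
Local Open Scope sesquilinear_scope.

Section Adjoint.
Variable C : numClosedFieldType.

Lemma adjmxE p r (A : 'M[C]_(p, r)) : adjmx A = A^t*.
Proof. by []. Qed.

Lemma trmxC_mul p r s (A : 'M[C]_(p, r)) (B : 'M[C]_(r, s)) :
  (A *m B)^t* = B^t* *m A^t*.
Proof. by rewrite trmx_mul map_mxM. Qed.

Lemma trmxC_diag p (d : 'rV[C]_p) : (diag_mx d)^t* = diag_mx (map_mx conjC d).
Proof.
apply/matrixP => i j; rewrite !mxE.
by have [->|_] := eqVneq i j; rewrite ?mulr1n ?mulr0n ?conjC0.
Qed.

Lemma trmxC_tens p1 r1 p2 r2 (A : 'M[C]_(p1, r1)) (B : 'M[C]_(p2, r2)) :
  (A *t B)^t* = A^t* *t B^t*.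
Proof. by rewrite trmx_tens map_mxT. Qed.

Lemma mulmx_trC_eq0 p r (Y : 'M[C]_(p, r)) : Y *m Y^t* = 0 -> Y = 0.
Proof.
move=> /matrixP YY0; apply/matrixP => i j; rewrite mxE.
have := YY0 i i; rewrite !mxE => /eqP.
rewrite psumr_eq0 => [/allP/(_ j (mem_index_enum _))|k _]; rewrite !mxE.
  by rewrite mul_conjC_eq0 => /eqP.
exact: mul_conjC_ge0.
Qed.

Lemma mxrank_mulmx_trC p r (Y : 'M[C]_(p, r)) : \rank (Y *m Y^t*) = \rank Y.
Proof.
apply/eqP; rewrite eqn_leq mxrankM_maxl /=.
have /mxrankS : (kermx (Y *m Y^t*) <= kermx Y)%MS.
  apply/sub_kermxP/mulmx_trC_eq0.
  by rewrite trmxC_mul mulmxA -(mulmxA _ Y) mulmx_ker mul0mx.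
by rewrite !mxrank_ker; have := rank_leq_row Y; lia.
Qed.

Lemma psdmx_mulmx_trC p r (Y : 'M[C]_(p, r)) : psdmx (Y *m Y^t*).
Proof.
split; first by rewrite adjmxE trmxC_mul trmxCK.
move=> v; rewrite adjmxE.
have -> : v^t* *m (Y *m Y^t*) *m v = (v^t* *m Y) *m (v^t* *m Y)^t*.
  by rewrite trmxC_mul trmxCK !mulmxA.
by rewrite !mxE sumr_ge0 // => i _; rewrite !mxE mul_conjC_ge0.
Qed.

Lemma diag_sqrtC_mulmx_trC p (d : 'rV[C]_p) : (forall i, 0 <= d 0 i) ->
  diag_mx (\row_i sqrtC (d 0 i)) *m (diag_mx (\row_i sqrtC (d 0 i)))^t* = diag_mx d.
Proof.
move=> d_ge0; rewrite trmxC_diag mulmx_diag; congr diag_mx; apply/rowP => i.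
by rewrite !mxE geC0_conj ?sqrtC_ge0 // -expr2 sqrtCK.
Qed.

Lemma psdmx_diag p (d : 'rV[C]_p) : (forall i, 0 <= d 0 i) -> psdmx (diag_mx d).
Proof. by move/diag_sqrtC_mulmx_trC <-; exact: psdmx_mulmx_trC. Qed.

(* An explicit factor, so that families of psd matrices are factored without choice. *)
Definition psd_factor p (A : 'M[C]_p) : 'M[C]_p :=
  (spectralmx A)^t* *m diag_mx (\row_i sqrtC (spectral_diag A 0 i)).

Lemma psd_factorE p (A : 'M[C]_p) : psdmx A -> A = psd_factor A *m (psd_factor A)^t*.
Proof.
move=> [A_herm A_ge0].
have /orthomx_spectralP : A \is normalmx by apply/normalmxP; rewrite -adjmxE A_herm.
set P := spectralmx A; set d := spectral_diag A.
have P_unitary : P \is unitarymx := spectral_unitarymx A.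
rewrite invmx_unitary // => AE.
have d_ge0 i : 0 <= d 0 i.
  have rowP_mul : row i P *m P^t* = delta_mx 0 i.
    by rewrite -row_mul (unitarymxP P_unitary) row1.
  have := A_ge0 ((row i P)^t*); rewrite adjmxE trmxCK.
  have -> : row i P *m A *m (row i P)^t* =
      (row i P *m P^t*) *m diag_mx d *m (row i P *m P^t*)^t*.
    by rewrite AE trmxC_mul trmxCK !mulmxA.
  by rewrite rowP_mul trmx_delta map_delta_mx -rowE -colE !mxE eqxx mulr1n.
by rewrite /psd_factor trmxC_mul trmxCK !mulmxA -(mulmxA _ _ (_^t*)) diag_sqrtC_mulmx_trC.
Qed.

End Adjoint.

(* Orthogonal complement; spectral.v declares this notation only locally. *)
Local Notation "B ^!" :=
  (orthomx conjC (mx_of_hermitian (hermitian1mx _)) B) : matrix_set_scope.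

Section Unitary.
Variable C : numClosedFieldType.

Lemma col_mx_unitary p1 p2 r (A : 'M[C]_(p1, r)) (B : 'M[C]_(p2, r)) :
  A \is unitarymx -> B \is unitarymx -> A *m B^t* = 0 ->
  col_mx A B \is unitarymx.
Proof.
move=> /unitarymxP A_unitary /unitarymxP B_unitary AB0; apply/unitarymxP.
have BA0 : B *m A^t* = 0 by rewrite -[B]trmxCK -trmxC_mul AB0 trmx0 map_mx0.
by rewrite tr_col_mx map_row_mx mul_col_row A_unitary B_unitary AB0 BA0 -scalar_mx_block.
Qed.

Lemma unitarymx_compl k N (E : 'M[C]_(k, N)) : E \is unitarymx ->
  exists S : 'M[C]_(N - k, N), S \is unitarymx /\ E *m S^t* = 0.
Proof.
move=> E_unitary.
have ES1 : (E <= schmidt (row_base E))%MS.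
  by apply: submx_trans (schmidt_sub _); rewrite eq_row_base.
have := schmidt_complete_unitarymx E; rewrite /schmidt_complete.
move: (schmidt (row_base E)) ES1 => S1 ES1.
move: (schmidt (row_base (E^!)%MS)) => S2 /unitarymxP.
rewrite tr_col_mx map_row_mx mul_col_row scalar_mx_block => /eq_block_mx [_ S1S2 _ S2S2].
have ES2 : E *m S2^t* = 0.
  have [D DE] := submxP ES1.
  have -> : E *m S2^t* = D *m (S1 *m S2^t*) by rewrite mulmxA -DE.
  by rewrite S1S2 mulmx0.
have S2_unitary : S2 \is unitarymx by exact/unitarymxP.
have rank_compl : \rank (E^!)%MS = (N - k)%N.
  by rewrite rank_ortho (mxrank_unitary E_unitary).
move: S2 S2_unitary ES2 {S1S2 S2S2}; rewrite rank_compl => S2 S2_unitary ES2.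
by exists S2.
Qed.

Lemma unitarymx_extend k N (E F : 'M[C]_(k, N)) :
  E \is unitarymx -> F \is unitarymx ->
  exists V : 'M[C]_N, V \is unitarymx /\ E *m V = F.
Proof.
move=> E_unitary F_unitary.
have kN : (k <= N)%N by rewrite -(mxrank_unitary E_unitary) rank_leq_col.
have [SE [SE_unitary ESE]] := unitarymx_compl E_unitary.
have [SF [SF_unitary FSF]] := unitarymx_compl F_unitary.
have QE_unitary := col_mx_unitary E_unitary SE_unitary ESE.
have QF_unitary := col_mx_unitary F_unitary SF_unitary FSF.
exists ((col_mx E SE)^t* *m col_mx F SF); split.
  apply/unitarymxP; rewrite trmxC_mul trmxCK mulmxA mulmxtVK //.
  by have := mulmxKtV (1%:M : 'M_N) QE_unitary (subnKC kN); rewrite mul1mx.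
rewrite mulmxA tr_col_mx map_row_mx mul_mx_row (unitarymxP E_unitary) ESE.
by rewrite mul_row_col mul1mx mul0mx addr0.
Qed.

Lemma row_full_unitary_factor p N (A : 'M[C]_(p, N)) :
  exists r (X : 'M[C]_(p, r)) (E : 'M[C]_(r, N)),
    [/\ row_full X, E \is unitarymx & A = X *m E].
Proof.
have A_sub : (A <= schmidt (row_base A))%MS.
  by apply: submx_trans (schmidt_sub _); rewrite eq_row_base.
have [X XE] := submxP A_sub.
exists (\rank A), X, (schmidt (row_base A)); split => //.
  by rewrite /row_full eqn_leq rank_leq_col /= {1}XE mxrankM_maxl.
by apply: schmidt_unitarymx; rewrite rank_leq_col.
Qed.

Lemma unitarymx_of_mulmx_trC p N (A B : 'M[C]_(p, N)) : A *m A^t* = B *m B^t* ->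
  exists V : 'M[C]_N, V \is unitarymx /\ A *m V = B.
Proof.
move=> AB.
have [rA [XA [EA [XA_full EA_unitary AE]]]] := row_full_unitary_factor A.
have [rB [XB [EB [_ EB_unitary BE]]]] := row_full_unitary_factor B.
have [L LXA] := row_fullP XA_full.
have gramA : A *m A^t* = XA *m XA^t* by rewrite AE trmxC_mul mulmxA mulmxtVK.
have gramB : B *m B^t* = XB *m XB^t* by rewrite BE trmxC_mul mulmxA mulmxtVK.
have XBE : XB = XA *m (L *m XB).
  have KXA : (1%:M - XA *m L) *m XA = 0.
    by rewrite mulmxBl mul1mx -mulmxA LXA mulmx1 subrr.
  apply/eqP; rewrite mulmxA -subr_eq0 -[X in X - _]mul1mx -mulmxBl.
  apply/eqP/mulmx_trC_eq0; rewrite trmxC_mul mulmxA -(mulmxA _ XB) -gramB -AB gramA.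
  by rewrite mulmxA KXA !mul0mx.
have F_unitary : L *m XB *m EB \is unitarymx.
  apply/unitarymxP; rewrite trmxC_mul mulmxA mulmxtVK //.
  rewrite trmxC_mul mulmxA -(mulmxA L) -gramB -AB gramA mulmxA LXA mul1mx.
  by rewrite -trmxC_mul LXA trmx1 map_mx1.
have [V [V_unitary EV]] := unitarymx_extend EA_unitary F_unitary.
by exists V; split; rewrite // AE -mulmxA EV mulmxA -XBE BE.
Qed.

End Unitary.

Section Gram.
Variable C : numClosedFieldType.

Definition rowsmx m N (f : 'I_m -> 'cV[C]_N) : 'M[C]_(m, N) := \matrix_(a, c) f a c 0.

Definition gram m N (f : 'I_m -> 'cV[C]_N) : 'M[C]_m := rowsmx f *m (rowsmx f)^t*.

Lemma adjmx_mulE N (u v : 'cV[C]_N) : (adjmx u *m v) 0 0 = \sum_j (u j 0)^* * v j 0.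
Proof. by rewrite mxE; apply: eq_bigr => j _; rewrite !mxE. Qed.

Lemma rowsmx_mul_trCE m N (f h : 'I_m -> 'cV[C]_N) a b :
  (rowsmx f *m (rowsmx h)^t*) a b = (adjmx (h b) *m f a) 0 0.
Proof. by rewrite adjmx_mulE mxE; apply: eq_bigr => j _; rewrite !mxE mulrC. Qed.

Lemma gramE m N (f : 'I_m -> 'cV[C]_N) a b : gram f a b = (adjmx (f b) *m f a) 0 0.
Proof. exact: rowsmx_mul_trCE. Qed.

Lemma rowsmx_mul m N (A : 'M[C]_N) (f : 'I_m -> 'cV[C]_N) :
  rowsmx (fun a => A *m f a) = rowsmx f *m A^T.
Proof.
by apply/matrixP => a c; rewrite !mxE; apply: eq_bigr => d _; rewrite !mxE mulrC.
Qed.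

Lemma rowsmx_quadE m N (f : 'I_m -> 'cV[C]_N) (A : 'M[C]_N) a :
  (rowsmx f *m A^T *m (rowsmx f)^t*) a a = (adjmx (f a) *m A *m f a) 0 0.
Proof. by rewrite -rowsmx_mul rowsmx_mul_trCE mulmxA. Qed.

Lemma gram_unitary m N (U : 'M[C]_N) (f : 'I_m -> 'cV[C]_N) : U \is unitarymx ->
  gram (fun a => U *m f a) = gram f.
Proof.
by move=> U_unitary; rewrite /gram rowsmx_mul trmxC_mul mulmxA mulmxtVK // trmx_unitary.
Qed.

Lemma unitary_of_gram m N (f h : 'I_m -> 'cV[C]_N) : gram f = gram h ->
  exists U : 'M[C]_N, U \is unitarymx /\ forall a, U *m f a = h a.
Proof.
rewrite /gram => /unitarymx_of_mulmx_trC [V [V_unitary fVh]].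
exists V^T; split => [|a]; first by rewrite trmx_unitary.
apply/matrixP => c j; rewrite (ord1 j).
have /matrixP/(_ a c) := fVh; rewrite !mxE => <-.
by apply: eq_bigr => d _; rewrite !mxE mulrC.
Qed.

Lemma gram_const m N (v : 'cV[C]_N) :
  gram (fun _ : 'I_m => v) = const_mx ((adjmx v *m v) 0 0).
Proof. by apply/matrixP => a b; rewrite [RHS]mxE gramE. Qed.

End Gram.

Lemma sum_mxtens (R : nmodType) p r (F : 'I_(p * r) -> R) :
  \sum_c F c = \sum_(i < p) \sum_(k < r) F (mxtens_index (i, k)).
Proof.
rewrite pair_big /= (reindex (@mxtens_index p r)) /=; first by apply: eq_bigr => -[].
by exists (@mxtens_unindex p r) => x _; rewrite (mxtens_indexK, mxtens_unindexK).
Qed.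

Section Stack.
Variables (C : numClosedFieldType) (n w m : nat).

(* A matrix with rows indexed by I x Q and columns by W encodes one vector of Q (x) W
   per input; [M M^*] is then their joint state on I (x) Q with W traced out. *)
Definition unstackmx (M : 'M[C]_(m * n, w)) (a : 'I_m) : 'cV[C]_(n * w) :=
  \col_c M (mxtens_index (a, (mxtens_unindex c).1)) (mxtens_unindex c).2.

Definition stackmx (f : 'I_m -> 'cV[C]_(n * w)) : 'M[C]_(m * n, w) :=
  \matrix_(r, k) f (mxtens_unindex r).1 (mxtens_index ((mxtens_unindex r).2, k)) 0.

Lemma unstackmxE M a i k :
  unstackmx M a (mxtens_index (i, k)) 0 = M (mxtens_index (a, i)) k.
Proof. by rewrite mxE mxtens_indexK. Qed.

Lemma stackmxK f a : unstackmx (stackmx f) a = f a.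
Proof.
apply/matrixP => c j; rewrite (ord1 j).
by case: (mxtens_indexP c) => i k; rewrite unstackmxE mxE mxtens_indexK.
Qed.

Lemma ptraceQ_mulmx_trC (M : 'M[C]_(m * n, w)) :
  ptraceQ (M *m M^t*) = gram (unstackmx M).
Proof.
apply/matrixP => a b; rewrite gramE adjmx_mulE sum_mxtens mxE.
apply: eq_bigr => i _; rewrite mxE; apply: eq_bigr => k _.
by rewrite !unstackmxE !mxE mulrC.
Qed.

Lemma Omega_mxtens (Xs : 'I_m -> 'M[C]_n) a i b j :
  Omega Xs (mxtens_index (a, i)) (mxtens_index (b, j)) = (a == b)%:R * Xs a i j.
Proof.
rewrite /Omega summxE (bigD1 a) //= big1 => [|s sa].
  by rewrite /kron tensmxE !mxE eqxx addr0 /= eq_sym.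
by rewrite /kron tensmxE !mxE eq_sym (negPf sa) mul0r.
Qed.

Lemma unstackmx_Omega (Xs : 'I_m -> 'M[C]_n) (M : 'M[C]_(m * n, w)) a :
  unstackmx (Omega Xs *m M) a = kron (Xs a) 1%:M *m unstackmx M a.
Proof.
apply/matrixP => c j; rewrite (ord1 j); case: (mxtens_indexP c) => i k.
rewrite unstackmxE !mxE !sum_mxtens (bigD1 a) //= [X in _ + X]big1 => [|b ba].
  rewrite addr0; apply: eq_bigr => l _; rewrite Omega_mxtens eqxx mul1r.
  rewrite (bigD1 k) //= [X in _ + X]big1 => [|k' k'k].
    by rewrite addr0 /kron tensmxE !mxE eqxx mulr1 mxtens_indexK.
  by rewrite /kron tensmxE !mxE eq_sym (negPf k'k) mulr0 mul0r.
by apply: big1 => l _; rewrite Omega_mxtens eq_sym (negPf ba) !mul0r.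
Qed.

Lemma ptraceQ_Omega (Xs : 'I_m -> 'M[C]_n) (M : 'M[C]_(m * n, w)) :
  ptraceQ (Omega Xs *m (M *m M^t*) *m adjmx (Omega Xs))
  = gram (fun a => kron (Xs a) 1%:M *m unstackmx M a).
Proof.
have -> : Omega Xs *m (M *m M^t*) *m adjmx (Omega Xs)
    = (Omega Xs *m M) *m (Omega Xs *m M)^t* by rewrite trmxC_mul !mulmxA.
by rewrite ptraceQ_mulmx_trC; apply/matrixP => a b; rewrite !gramE !unstackmx_Omega.
Qed.

End Stack.

Section Measurement.
Variable C : numClosedFieldType.

Definition thin_factor p r (B : 'M[C]_(p, r)) : 'M[C]_(p, \rank B) :=
  col_base B *m psd_factor (row_base B *m (row_base B)^t*).

Lemma thin_factorE p r (B : 'M[C]_(p, r)) :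
  thin_factor B *m (thin_factor B)^t* = B *m B^t*.
Proof.
rewrite /thin_factor (trmxC_mul (col_base B)) mulmxA -(mulmxA _ (psd_factor _)).
rewrite -psd_factorE; last exact: psdmx_mulmx_trC.
by rewrite -[in RHS](mulmx_base B) (trmxC_mul (col_base B)) !mulmxA.
Qed.

Lemma mxrank_psd_factor p (A : 'M[C]_p) : psdmx A -> \rank (psd_factor A) = \rank A.
Proof. by move=> A_psd; rewrite [in RHS](psd_factorE A_psd) mxrank_mulmx_trC. Qed.

Definition indicator_mx N (b : 'I_N -> bool) : 'M[C]_N := diag_mx (\row_c (b c)%:R).

Lemma orth_proj_indicator N (b : 'I_N -> bool) : orth_proj (indicator_mx b).
Proof.
split; rewrite ?adjmxE ?trmxC_diag ?mulmx_diag; congr diag_mx; apply/rowP => c.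
  by rewrite !mxE conjC_nat.
by rewrite !mxE; case: (b c); rewrite ?mulr1 ?mulr0.
Qed.

Lemma trmx_indicator N (b : 'I_N -> bool) : (indicator_mx b)^T = indicator_mx b.
Proof. exact: tr_diag_mx. Qed.

Lemma sum_indicator (T : finType) N (blk : 'I_N -> T) :
  \sum_z indicator_mx (fun c => blk c == z) = 1%:M.
Proof.
apply/matrixP => i j; rewrite summxE !mxE.
under eq_bigr do rewrite !mxE.
have [->|ne] := eqVneq i j; last by rewrite big1 // => z _; rewrite mulr0n.
rewrite (bigD1 (blk j)) //= eqxx mulr1n big1 ?addr0 // => z.
by rewrite eq_sym => /negPf ->; rewrite mulr0n.
Qed.

Lemma mul_pid_diag_pid S N (SN : (S <= N)%N) (d : 'rV[C]_N) :
  (pid_mx S : 'M[C]_(S, N)) *m diag_mx d *m (pid_mx S)^t* =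
  diag_mx (\row_(s < S) d 0 (widen_ord SN s)).
Proof.
rewrite tr_pid_mx map_pid_mx mul_mx_diag; apply/matrixP => s s'; rewrite !mxE.
rewrite (bigD1 (widen_ord SN s)) //= big1 => [|c cs].
  rewrite !mxE /= eqxx ltn_ord /= addr0 mul1r andbT.
  have [->|ne] := eqVneq s s'; first by rewrite eqxx mulr1 mulr1n.
  by rewrite (negPf ne : (s == s' :> nat) = false) mulr0 mulr0n.
rewrite !mxE; suff /negPf-> : (s : nat) != c by rewrite !mul0r.
by apply: contraNneq cs => sc; apply/eqP/val_inj.
Qed.

Lemma mul_mxrow_diag_trC K (p_ : 'I_K -> nat) m (G : forall j, 'M[C]_(m, p_ j))
    (c : 'I_K -> C) :
  \mxrow_j G j *m diag_mx (\mxrow_j (const_mx (c j) : 'rV_(p_ j))) *m (\mxrow_j G j)^t*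
  = \sum_j c j *: (G j *m (G j)^t*).
Proof.
rewrite diag_mxrow; under eq_mxdiag do rewrite diag_const_mx.
rewrite mul_mxrow_mxdiag tr_mxrow.
have -> : (\mxcol_j (G j)^T) ^ conjC = \mxcol_j (G j)^t*.
  by apply/matrixP => i j; rewrite !mxE.
by rewrite mul_mxrow_mxcol; apply: eq_bigr => j _; rewrite mul_mx_scalar -scalemxAl.
Qed.

Lemma block_measurement (T : finType) (z0 : T) m N (Gam : T -> 'M[C]_m) :
  (forall z, psdmx (Gam z)) -> (\sum_z \rank (Gam z) <= N)%N ->
  exists (F : 'M[C]_(m, N)) (blk : 'I_N -> T),
    forall z, F *m indicator_mx (fun c => blk c == z) *m F^t* = Gam z.
Proof.
move=> Gam_psd rank_le.
pose B (j : 'I_#|T|) := psd_factor (Gam (enum_val j)).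
pose S := (\sum_(j < #|T|) \rank (B j))%N.
have SN : (S <= N)%N.
  apply: leq_trans rank_le; rewrite (big_enum_val (fun z => \rank (Gam z))) /=.
  by rewrite leq_eqVlt; apply/orP; left; apply/eqP/eq_bigr => j _; rewrite mxrank_psd_factor.
pose blk (c : 'I_N) : T :=
  if @insub _ (fun x => x < S)%N 'I_S (val c) is Some s then enum_val (tagnat.sig1 s) else z0.
exists (\mxrow_j thin_factor (B j) *m pid_mx S), blk => z.
rewrite trmxC_mul !mulmxA -!(mulmxA (\mxrow_j _)) mul_pid_diag_pid.
have -> : \row_s (\row_c ((blk c == z)%:R : C)) 0 (widen_ord SN s)
    = \mxrow_j (const_mx ((enum_val j == z)%:R) : 'rV[C]_(\rank (B j))).
  by apply/rowP => s; rewrite !mxE /blk /= valK.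
rewrite mulmxA mul_mxrow_diag_trC.
under eq_bigr do rewrite thin_factorE -(psd_factorE (Gam_psd _)).
rewrite -(big_enum_val (fun z' => (z' == z)%:R *: Gam z')) /=.
rewrite (bigD1 z) //= eqxx scale1r big1 ?addr0 // => z' /negPf ->.
by rewrite scale0r.
Qed.

End Measurement.

Section QueryAlgorithm.
Variables (C : numClosedFieldType) (n w : nat).

Definition init_state : 'cV[C]_(n * w) := kron (basis_cv C n 0) (basis_cv C w 0).

Lemma basis_cv_normE p : (0 < p)%N -> (basis_cv C p 0)^t* *m basis_cv C p 0 = 1%:M.
Proof.
move=> p_gt0; have -> : basis_cv C p 0 = delta_mx (Ordinal p_gt0) 0.
  by apply/colP => k; rewrite !mxE andbT.
by rewrite trmx_delta map_delta_mx mul_delta_mx; apply/matrixP => i j; rewrite !ord1 !mxE.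
Qed.

Lemma gram_init_state m : (0 < n)%N -> (0 < w)%N ->
  gram (fun _ : 'I_m => init_state) = const_mx 1.
Proof.
move=> n_gt0 w_gt0; rewrite gram_const; congr const_mx.
have := tensmx_mul ((basis_cv C n 0)^t*) ((basis_cv C w 0)^t*)
  (basis_cv C n 0) (basis_cv C w 0).
rewrite !basis_cv_normE // tens_scalar1mx => /matrixP/(_ 0 0).
rewrite [RHS]castmxE [RHS]mxE eqxx mulr1n => <-.
by rewrite -trmxC_tens.
Qed.

Lemma eq_qqa_state (X : 'M[C]_n) (U U' : nat -> 'M[C]_(n * w)) q :
  (forall t, (t <= q)%N -> U t = U' t) -> qqa_state X U q = qqa_state X U' q.
Proof.
elim: q => [|q IH] eqU /=; first by rewrite eqU.
by rewrite eqU // IH // => t tq; apply/eqU/ltnW.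
Qed.

Lemma qqa_of_gram_chain m (Xs : 'I_m -> 'M[C]_n) (psi : nat -> 'I_m -> 'cV[C]_(n * w)) q :
  gram (fun _ => init_state) = gram (psi 0%N) ->
  (forall t, (t < q)%N ->
     gram (fun a => kron (Xs a) 1%:M *m psi t a) = gram (psi t.+1)) ->
  exists U, (forall t, U t \is unitarymx) /\ forall a, qqa_state (Xs a) U q = psi q a.
Proof.
move=> gram0; elim: q => [_|q IH gramS].
  have [V [V_unitary V_init]] := unitary_of_gram gram0.
  by exists (fun _ => V); split => // a; exact: V_init.
have [U [U_unitary U_psi]] := IH (fun t tq => gramS t (ltnW tq)).
have [V [V_unitary V_psi]] := unitary_of_gram (gramS q (ltnSn q)).
exists (fun t => if t == q.+1 then V else U t); split => [t|a]; first by case: eqP.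
rewrite /= eqxx -V_psi -U_psi; congr (_ *m (_ *m _)); symmetry.
by apply: eq_qqa_state => t tq; rewrite ltn_eqF.
Qed.

End QueryAlgorithm.

Section Feasibility.
Variable C : numClosedFieldType.

Lemma delta_quadE p (A : 'M[C]_p) i :
  (adjmx (delta_mx i 0 : 'cV[C]_p) *m A *m (delta_mx i 0 : 'cV[C]_p)) 0 0 = A i i.
Proof. by rewrite adjmxE trmx_delta map_delta_mx -rowE -colE !mxE. Qed.

Lemma loewner_hadamard_DeltaP m (T : finType) (g : 'I_m -> T) z (G : 'M[C]_m) c :
  loewner_ge (hadamard (Delta C g z) G) (c *: Delta C g z) <->
  (forall a, g a = z -> c <= G a a).
Proof.
rewrite /loewner_ge.
have -> : hadamard (Delta C g z) G - c *: Delta C g z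
    = diag_mx (\row_a ((g a == z)%:R * (G a a - c))).
  apply/matrixP => i j; rewrite !mxE.
  have [->|ne] := eqVneq i j; last by rewrite !mulr0n mulr0 mul0r subrr.
  by rewrite /= !mulr1n mulrBr [c * _]mulrC.
split => [[_ diag_ge0] a gaz | ge_c].
  have := diag_ge0 (delta_mx a 0).
  by rewrite delta_quadE !mxE eqxx gaz eqxx mul1r mulr1n subr_ge0.
apply: psdmx_diag => a; rewrite mxE.
by have [/ge_c|_] := eqVneq (g a) z; rewrite ?mul1r ?subr_ge0 ?mul0r.
Qed.

Lemma orth_proj_tr p (P : 'M[C]_p) : orth_proj P -> orth_proj P^T.
Proof.
move=> [P_herm P_idem]; split; last by rewrite -trmx_mul P_idem.
by rewrite adjmxE -map_trmx -adjmxE P_herm.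
Qed.

Lemma orth_proj_mulmx_trC p r (A : 'M[C]_(r, p)) (P : 'M[C]_p) :
  orth_proj P -> A *m P *m A^t* = (A *m P) *m (A *m P)^t*.
Proof.
move=> [P_herm P_idem].
by rewrite trmxC_mul -(adjmxE P) P_herm [RHS]mulmxA -(mulmxA A P P) P_idem.
Qed.

Lemma feasible_of_QQA n m (Xs : 'I_m -> 'M[C]_n) (T : finType) (g : 'I_m -> T) q eps w :
  (0 < n)%N -> (0 < q)%N -> QQA_exists Xs g q eps w -> P_feasible Xs g q eps.
Proof.
move=> n_gt0 q_gt0 [w_gt0 [U [P [U_unitary P_proj P_sum success]]]].
pose psi t a := qqa_state (Xs a) U t.
pose M t := stackmx (psi t).
pose Psi := rowsmx (psi q).
have gram_rho t : ptraceQ (M t *m (M t)^t*) = gram (psi t).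
  by rewrite ptraceQ_mulmx_trC; apply/matrixP => a b; rewrite !gramE !stackmxK.
have gram_step t : (t < q)%N ->
    ptraceQ (Omega Xs *m (M t *m (M t)^t*) *m adjmx (Omega Xs)) = gram (psi t.+1).
  move=> tq; rewrite ptraceQ_Omega [RHS]gram_unitary ?U_unitary //.
  by apply/matrixP => a b; rewrite !gramE !stackmxK.
pose rhoI := ptraceQ (Omega Xs *m (M q.-1 *m (M q.-1)^t*) *m adjmx (Omega Xs)).
have rhoIE : rhoI = Psi *m Psi^t* by rewrite /rhoI gram_step prednK.
exists (fun t => M t *m (M t)^t*), rhoI, (fun z => Psi *m (P z)^T *m Psi^t*).
split; first by move=> t _; exact: psdmx_mulmx_trC.
split; first by rewrite rhoIE; exact: psdmx_mulmx_trC.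
split.
  by move=> z; rewrite orth_proj_mulmx_trC; [exact: psdmx_mulmx_trC | exact: orth_proj_tr].
split; first by rewrite gram_rho gram_unitary ?U_unitary // gram_init_state.
split; first by case=> [//|t] /andP[_ tq]; rewrite gram_rho gram_step // ltnW.
split; first by [].
split.
  rewrite rhoIE -mulmx_suml -mulmx_sumr.
  have -> : \sum_z (P z)^T = 1%:M.
    rewrite -trmx1 -P_sum; apply/matrixP => i j; rewrite [RHS]mxE !summxE.
    by under eq_bigr do rewrite mxE.
  by rewrite mulmx1.
move=> z; apply/loewner_hadamard_DeltaP => a <-.
by rewrite rowsmx_quadE; exact: success.
Qed.

Lemma pid_mx_unitary p r : (p <= r)%N -> (pid_mx p : 'M[C]_(p, r)) \is unitarymx.
Proof.
by move=> pr; apply/unitarymxP; rewrite tr_pid_mx map_pid_mx pid_mx_id // pid_mx_1.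
Qed.

Lemma qqa_states_of_feasible n m (Xs : 'I_m -> 'M[C]_n) (T : finType) (g : 'I_m -> T)
    q eps rho rhoI Gam w (phi : 'I_m -> 'cV[C]_(n * w)) :
  (0 < n)%N -> (0 < w)%N -> (0 < q)%N -> (m * n <= w)%N ->
  P_feasible_sol Xs g q eps rho rhoI Gam -> gram phi = rhoI ->
  exists U, (forall t, U t \is unitarymx) /\ forall a, qqa_state (Xs a) U q = phi a.
Proof.
move=> n_gt0 w_gt0 q_gt0 mn_le_w [rho_psd [_ [_ [rho0 [rho_step [rhoIE _]]]]]] phi_gram.
pose M t : 'M[C]_(m * n, w) := psd_factor (rho t) *m pid_mx (m * n).
have rhoE t : (t < q)%N -> rho t = M t *m (M t)^t*.
  move=> tq; rewrite (trmxC_mul (psd_factor (rho t))) mulmxA mulmxtVK ?pid_mx_unitary //.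
  exact/psd_factorE/rho_psd.
have ptraceQ_step t : (t < q)%N ->
    gram (fun a => kron (Xs a) 1%:M *m unstackmx (M t) a) =
    ptraceQ (Omega Xs *m rho t *m adjmx (Omega Xs)).
  by move=> tq; rewrite -ptraceQ_Omega -rhoE.
pose psi t := if (t < q)%N then unstackmx (M t) else phi.
have psiE t : (t < q)%N -> psi t = unstackmx (M t) by rewrite /psi => ->.
have [||U [U_unitary U_psi]] := @qqa_of_gram_chain C n w m Xs psi q.
- by rewrite psiE // -ptraceQ_mulmx_trC -rhoE // rho0 gram_init_state.
- move=> t tq; rewrite psiE // ptraceQ_step //.
  have [tq'|] := ltnP t.+1 q; first by rewrite psiE // -ptraceQ_mulmx_trC -rhoE // rho_step.
  move=> qt; have qE : q = t.+1 by apply/eqP; rewrite eqn_leq tq qt.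
  by subst q; rewrite /psi ltnn phi_gram rhoIE.
by exists U; split => // a; rewrite U_psi /psi ltnn.
Qed.

End Feasibility.

Lemma leq_mul_ceil_div a n : (0 < n)%N -> (a <= n * ceil_div a n)%N.
Proof.
move=> n_gt0; rewrite /ceil_div; have := divn_eq (a + n.-1) n.
have := ltn_pmod (a + n.-1) n_gt0; lia.
Qed.

Lemma QQA_of_feasible (C : numClosedFieldType) n m (Xs : 'I_m -> 'M[C]_n) (T : finType)
    (g : 'I_m -> T) q eps rho rhoI Gam :
  (0 < n)%N -> (0 < m)%N -> (0 < q)%N -> P_feasible_sol Xs g q eps rho rhoI Gam ->
  QQA_exists Xs g q eps (maxn (m * n) (ceil_div (\sum_z \rank (Gam z)) n)).
Proof.
move=> n_gt0 m_gt0 q_gt0 sol.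
have [_ [_ [Gam_psd [_ [_ [_ [Gam_sum Gam_success]]]]]]] := sol.
set w := maxn _ _.
have mn_le_w : (m * n <= w)%N := leq_maxl _ _.
have w_gt0 : (0 < w)%N by apply: leq_trans mn_le_w; rewrite muln_gt0 m_gt0 n_gt0.
have rank_le : (\sum_z \rank (Gam z) <= n * w)%N.
  by apply: leq_trans (leq_mul_ceil_div _ n_gt0) _; rewrite leq_mul2l leq_maxr orbT.
have [F [blk FPF]] := block_measurement (g (Ordinal m_gt0)) Gam_psd rank_le.
pose P z := indicator_mx C (fun c => blk c == z).
pose phi a : 'cV[C]_(n * w) := (row a F)^T.
have rowsmx_phi : rowsmx phi = F by apply/matrixP => a c; rewrite !mxE.
have phi_gram : gram phi = rhoI.
  rewrite /gram rowsmx_phi -Gam_sum.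
  have -> : F *m F^t* = F *m (\sum_z P z) *m F^t* by rewrite sum_indicator mulmx1.
  by rewrite mulmx_sumr mulmx_suml; apply: eq_bigr => z _; exact: FPF.
have [U [U_unitary U_phi]] := qqa_states_of_feasible n_gt0 w_gt0 q_gt0 mn_le_w sol phi_gram.
split => //; exists U, P; split => [t _|z||s]; rewrite ?U_phi //.
- exact: orth_proj_indicator.
- exact: sum_indicator.
rewrite -rowsmx_quadE rowsmx_phi trmx_indicator FPF.
exact: (loewner_hadamard_DeltaP _ _ _ _).1 (Gam_success (g s)) s erefl.
Qed.

Theorem theorem1 (C : numClosedFieldType) (n m : nat) (Xs : 'I_m -> 'M[C]_n)
  (T : finType) (g : 'I_m -> T) (q : nat) (eps : C) :
  (0 < n)%N -> (0 < m)%N -> injective Xs -> (forall s, Xs s \is unitarymx) ->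
  (0 < q)%N -> 0 <= eps <= 1 ->
  [/\ (exists w, QQA_exists Xs g q eps w) <-> P_feasible Xs g q eps,
      (forall rho rhoI Gam, P_feasible_sol Xs g q eps rho rhoI Gam ->
         exists w, (w <= maxn (m * n) (ceil_div (\sum_(z : T) \rank (Gam z)) n))%N
                   /\ QQA_exists Xs g q eps w) &
      ((exists w, QQA_exists Xs g q eps w) ->
         exists w, (w <= maxn (m * n) (ceil_div (m * #|T|) n))%N
                   /\ QQA_exists Xs g q eps w)].
Proof.
move=> n_gt0 m_gt0 _ _ q_gt0 _.
have QQA_of_sol rho rhoI Gam : P_feasible_sol Xs g q eps rho rhoI Gam ->
    exists w, (w <= maxn (m * n) (ceil_div (\sum_(z : T) \rank (Gam z)) n))%N
              /\ QQA_exists Xs g q eps w.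
  by move=> sol; eexists; split; last exact: QQA_of_feasible sol.
split; first split.
- by case=> w /(feasible_of_QQA n_gt0 q_gt0).
- by case=> rho [rhoI [Gam /QQA_of_sol [w [_ QQA]]]]; exists w.
- exact: QQA_of_sol.
case=> w /(feasible_of_QQA n_gt0 q_gt0) [rho [rhoI [Gam /QQA_of_sol [w' [w'_le QQA]]]]].
exists w'; split => //; apply: leq_trans w'_le _.
rewrite geq_max leq_maxl (leq_trans _ (leq_maxr _ _)) // leq_div2r // leq_add2r.
by rewrite mulnC -sum_nat_const; apply: leq_sum => z _; exact: rank_leq_row.
Qed.
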